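(* There is an instance of unweighted online stochastic matching for which every online algorithm satisfies \[ \frac{\textsc{Alg}}{\textsc{JL}}\le1-\frac{1}{1-\ln2}\Big(\frac{1}{2e}-\frac{\ln2}{e^2}\Big)\approx0.706, \] where $\textsc{Alg}$ is the algorithm's expected number of matched edges and $\textsc{JL}$ is the optimal value of the Jaillet–Lu LP for the instance.
   Context: Poisson arrival model: $I$ is a finite set of online types and $J$ a finite set of offline vertices, with edges $E\subseteq I\times J$, $I_j=\{i:(i,j)\in E\}$, and $J_i=\{j:(i,j)\in E\}$. Type $i$ arrives by an independent Poisson process of rate $\lambda_i>0$ on $[0,1]$. Each arrival must be matched immediately and irrevocably to an unmatched neighbor, or left unmatched. Unweighted means all $w_{ij}=1$. Jaillet–Lu LP: maximize $\sum_{(i,j)\in E}w_{ij}x_{ij}$ subject to: - $\sum_{j\in J_i}x_{ij}\le\lambda_i$ for all $i$; - $\sum_{i\in I_j}x_{ij}\le1$ for all $j$; - $\sum_{i\in I_j}(2x_{ij}-\lambda_i)^+\le1-\ln2$ for all $j$; - $x\ge0$. Here $z^+=\max\{z,0\}$. *)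

From HB Require Import structures.
From mathcomp Require Import all_boot all_order all_algebra.
From mathcomp Require Import all_classical all_reals all_analysis.
Set Implicit Arguments. Unset Strict Implicit. Unset Printing Implicit Defensive.
Import Order.TTheory GRing.Theory Num.Theory.
Local Open Scope classical_set_scope.
Local Open Scope ring_scope.

Section OnlineStochasticMatching.
Variables (R : realType) (I J : finType).

(** An instance: edge set [E] and arrival rates [lam] (Poisson rate of type i
    on [0,1]).  All weights are 1 (unweighted). *)

(** History of the online process so far: one entry per arrival,
    (arrival time, online type, decision: [Some j] = matched to offline j,
    [None] = left unmatched), in chronological order. *)
Definition history := seq (R * I * option J).

Definition matched_in (h : history) (j : J) : bool :=
  has (fun a : R * I * option J => a.2 == Some j) h.

(** A (possibly randomized) online algorithm, as a behavioural policy: given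
    the history, the current arrival time [u] and the arriving type [i], it
    gives the probability [p h u i o] of taking option [o]. *)
Definition policy := history -> R -> I -> option J -> R.

Definition valid_policy (E : {set I * J}) (p : policy) : Prop :=
  forall (h : history) (u : R) (i : I),
    (forall o, 0 <= p h u i o) /\
    (\sum_(o : option J) p h u i o = 1) /\
    (forall j, 0 < p h u i (Some j) -> ((i, j) \in E) /\ ~~ matched_in h j).

Definition total_rate (lam : I -> R) : R := \sum_i lam i.

(** The next arrival occurs at time u in [s,1] of type i with
    density lam i * exp(-Lambda (u - s)). *)
Fixpoint exp_matches_k (lam : I -> R) (p : policy) (k : nat) (h : history) (s : R)
    : \bar R :=
  match k with
  | 0 => 0%E
  | k'.+1 =>
    (\int[lebesgue_measure]_(u in `[s, 1%R])
       ((expR (- total_rate lam * (u - s)))%:E *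
        \sum_(i : I) \sum_(o : option J)
          ((lam i * p h u i o)%:E *
           (((o != None)%:R : R)%:E + exp_matches_k lam p k' (rcons h (u, i, o)) u)%E)%E))%E
  end.

(** Expected number of matched edges of the algorithm over the whole horizon
    [0,1] (the limit = supremum of the nondecreasing truncations). *)
Definition ALG (lam : I -> R) (p : policy) : \bar R :=
  ereal_sup [set exp_matches_k lam p k [::] 0 | k in [set: nat]].

Definition JL_feasible (E : {set I * J}) (lam : I -> R) (x : I -> J -> R) : Prop :=
  (forall i j, 0 <= x i j) /\
  (forall i j, (i, j) \notin E -> x i j = 0) /\
  (forall i, \sum_(j | (i, j) \in E) x i j <= lam i) /\
  (forall j, \sum_(i | (i, j) \in E) x i j <= 1) /\
  (forall j, \sum_(i | (i, j) \in E) Num.max (2 * x i j - lam i) 0 <= 1 - ln 2).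

Definition JL_objective (E : {set I * J}) (x : I -> J -> R) : R :=
  \sum_(e in E) x e.1 e.2.

Definition JL_value (E : {set I * J}) (lam : I -> R) (v : R) : Prop :=
  (exists x, JL_feasible E lam x /\ JL_objective E x = v) /\
  (forall x, JL_feasible E lam x -> JL_objective E x <= v).

End OnlineStochasticMatching.

Definition jl_bound (R : realType) : R :=
  1 - (1 - ln 2)^-1 * ((2 * expR 1)^-1 - ln 2 / (expR 1 ^+ 2)).

From HB Require Import structures.
From mathcomp Require Import all_boot all_order all_algebra.
From mathcomp Require Import all_classical all_reals all_analysis.
From mathcomp Require Import ring lra.
Set Implicit Arguments. Unset Strict Implicit. Unset Printing Implicit Defensive.
Import Order.TTheory GRing.Theory Num.Theory.
Local Open Scope ring_scope.

(* The instance has a shared online type of rate [2 ln 2] adjacent to both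
   offline vertices and, for each offline vertex, a private type of rate
   [1 - ln 2]; the Jaillet--Lu optimum is 2.  Any online algorithm is bounded
   by the value function [V_m(u)] of the set [m] of matched offline vertices,
   the solution of the Hamilton--Jacobi--Bellman equation
   [V' = 2 V - sum_i rate_i * (best gain of an arrival of type i)], [V(1) = 0],
   which integrates to [V(s) = int_s^1 e^{-2(u-s)} (...) du].  Induction on the
   number of arrivals then bounds every truncation of ALG by
   [V_{}(0) = 2 * jl_bound]. *)

(* Needed because an arbitrary policy makes the integrand non-measurable. *)
Lemma ge0_le_integral_nonmeasurable d (T : measurableType d) (R : realType)
    (mu : {measure set T -> \bar R}) (D : set T) (f g : T -> \bar R) :
  (forall x, D x -> (0 <= f x)%E) -> (forall x, D x -> (f x <= g x)%E) ->
  (\int[mu]_(x in D) f x <= \int[mu]_(x in D) g x)%E.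
Proof.
move=> f0 fg; have g0 x : D x -> (0 <= g x)%E.
  by move=> Dx; exact: le_trans (f0 x Dx) (fg x Dx).
rewrite ge0_integralE // ge0_integralE //.
apply: ereal_sup_le => _ [h hf <-]; exists h => //= x.
apply: le_trans (hf x) _; rewrite /patch; case: ifP => // /set_mem; exact: fg.
Qed.

Section discounted_integral.
Variable R : realType.
Local Notation mu := (@lebesgue_measure R).

Lemma continuous_derivable (f : R^o -> R^o) :
  (forall x, derivable f x 1) -> continuous f.
Proof. by move=> fd x; apply/differentiable_continuous/derivable1_diffP. Qed.

Lemma integral_is_derive (F f : R -> R) (a b : R) : a < b ->
  (forall x : R, is_derive x 1 F (f x)) -> continuous (f : R^o -> R^o) ->
  (\int[mu]_(x in `[a, b]) (f x)%:E = (F b - F a)%:E)%E.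
Proof.
move=> ab Fd fc; have Fc : continuous (F : R^o -> R^o).
  by apply: continuous_derivable => x; case: (Fd x).
rewrite EFinB; apply: continuous_FTC2 => //.
- exact: continuous_subspaceT fc.
- split; [by move=> x _; case: (Fd x)
         | exact: cvg_at_right_filter (Fc a) | exact: cvg_at_left_filter (Fc b)].
- by move=> x _; rewrite derive1E; apply: derive_val.
Qed.

Definition expR_shift (c t u : R) := expR (c * (u - t)).

Global Instance is_derive_expR_shift (c t x : R) :
  is_derive x 1 (expR_shift c t) (c * expR_shift c t x).
Proof.
rewrite /expR_shift mulrC.
have -> : (fun u => expR (c * (u - t))) = expR \o (fun u => c * (u - t)) by [].
apply: is_derive1_comp.
have -> : (fun u : R => c * (u - t)) = c \*: (id - cst t) :> (R^o -> R^o).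
  by apply/funext.
by apply: is_derive_eq; rewrite subr0 /GRing.scale /= mulr1.
Qed.

(* [F u = - e^{-a(u-s)} V u] is an antiderivative of the integrand. *)
Lemma discounted_integral_ode (a : R) (V G : R -> R) (s : R) : s < 1 ->
  (forall x : R, is_derive x 1 V (a * V x - G x)) -> continuous (G : R^o -> R^o) ->
  (\int[mu]_(u in `[s, 1%R]) (expR_shift (- a) s u * G u)%:E
    = (V s - expR_shift (- a) s 1 * V 1)%:E)%E.
Proof.
move=> s1 Vd Gc.
have Fd (x : R) : is_derive x 1 (fun u => - (expR_shift (- a) s u * V u))
                               (expR_shift (- a) s x * G x).
  by apply: is_derive_eq; rewrite /GRing.scale /= /expR_shift; ring.
rewrite (integral_is_derive s1 Fd).
  by rewrite {2}/expR_shift subrr mulr0 expR0; congr EFin; ring.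
have ec : continuous (expR_shift (- a) s : R^o -> R^o).
  by apply: continuous_derivable => x; exact: ex_derive.
by move=> x; apply: continuousM; [exact: ec | exact: Gc].
Qed.

End discounted_integral.

Section hard_instance.
Variable R : realType.
Local Notation mu := (@lebesgue_measure R).

Lemma ln2_gt0 : 0 < ln (2 : R).
Proof. by apply: ln_gt0; rewrite ltr1n. Qed.

Lemma ln2_lt1 : ln (2 : R) < 1.
Proof.
have e2 : (2 : R) < expR 1 by rewrite -[2]/(1 + 1 : R) expR_gt1Dx ?oner_neq0.
by rewrite -[X in _ < X](@expRK R 1) ltr_ln ?posrE ?expR_gt0.
Qed.

Definition shared_rate : R := 2 * ln 2.
Definition private_rate : R := 1 - ln 2.
Definition residual_rate : R := 1 + ln 2.

Lemma private_rate_gt0 : 0 < private_rate.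
Proof. by rewrite subr_gt0 ln2_lt1. Qed.

Definition edges : {set 'I_3 * 'I_2} :=
  [set e | (val e.1 == 0%N) || (val e.1 == (val e.2).+1)].
Definition rate (i : 'I_3) : R := if val i == 0%N then shared_rate else private_rate.

Definition j0 : 'I_2 := @Ordinal 2 0 isT.
Definition j1 : 'I_2 := @Ordinal 2 1 isT.
Definition i0 : 'I_3 := @Ordinal 3 0 isT.
Definition i1 : 'I_3 := @Ordinal 3 1 isT.
Definition i2 : 'I_3 := @Ordinal 3 2 isT.

Lemma ord2P (j : 'I_2) : j = j0 \/ j = j1.
Proof. by case: j => [[|[|n]] lt_j2]; [left | right | by []]; exact: val_inj. Qed.

Lemma ord3P (i : 'I_3) : [\/ i = i0, i = i1 | i = i2].
Proof.
by case: i => [[|[|[|n]]] lt_i3]; [apply: Or31 | apply: Or32 | apply: Or33 | by []];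
  exact: val_inj.
Qed.

Lemma rate_gt0 i : 0 < rate i.
Proof.
rewrite /rate /shared_rate; case: ifP => _; last exact: private_rate_gt0.
by rewrite mulr_gt0 ?ln2_gt0.
Qed.

Lemma total_rate_edges : total_rate rate = 2.
Proof.
by rewrite /total_rate !big_ord_recr big_ord0 /rate /= /shared_rate /private_rate; ring.
Qed.

Lemma JL_objective_edges (x : 'I_3 -> 'I_2 -> R) :
  JL_objective edges x = \sum_j \sum_(i | (i, j) \in edges) x i j.
Proof.
under eq_bigr do rewrite big_mkcond.
rewrite exchange_big pair_bigA /= /JL_objective big_mkcond /=.
by apply: eq_bigr => -[a b] _.
Qed.

(* Each offline vertex gets [ln 2] from the shared type and [1 - ln 2] from
   its private type, making the [1 - ln 2] constraint tight. *)
Definition jl_solution (i : 'I_3) (j : 'I_2) : R :=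
  if (i, j) \in edges then (if val i == 0%N then ln 2 else private_rate) else 0.

Lemma jl_solution_feasible : JL_feasible edges rate jl_solution.
Proof.
have l0 := ln2_gt0; have c0 := private_rate_gt0.
have max0 : Num.max (2 * ln 2 - shared_rate) 0 = 0 by rewrite subrr maxxx.
have maxc : Num.max (2 * private_rate - private_rate) 0 = private_rate.
  by rewrite mulr2n mulrDl mul1r addrK max_l // ltW.
rewrite /JL_feasible /jl_solution; split; [|split; [|split; [|split]]].
- by move=> i j; case: ifP => _; [case: ifP => _; lra | lra].
- by move=> i j /negbTE ->.
- move=> i; rewrite big_mkcond !big_ord_recr big_ord0 /=.
  by case: (ord3P i) => ->; rewrite /rate /shared_rate !inE /=; lra.
- move=> j; rewrite big_mkcond !big_ord_recr big_ord0 /=.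
  by case: (ord2P j) => ->; rewrite /rate !inE /= /private_rate; lra.
- move=> j; rewrite big_mkcond !big_ord_recr big_ord0 /=.
  by case: (ord2P j) => ->; rewrite /rate !inE /= max0 maxc /private_rate; lra.
Qed.

Lemma JL_value_edges : JL_value edges rate 2.
Proof.
split.
  exists jl_solution; split; first exact: jl_solution_feasible.
  rewrite JL_objective_edges; under eq_bigr do rewrite big_mkcond.
  rewrite !big_ord_recr !big_ord0 /= /jl_solution !inE /=.
  by rewrite /private_rate; ring.
move=> x [_ [_ [_ [le_x1 _]]]]; rewrite JL_objective_edges.
apply: (@le_trans _ _ (\sum_(j < 2) (1 : R))); first exact: ler_sum.
by rewrite sumr_const card_ord.
Qed.

Let scale_realE (a b : R) : a *: b = a * b := erefl.

Definition W1 : R -> R := cst 1 - expR_shift residual_rate 1.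
Definition W2 : R -> R := cst 2 - 2 \*: expR_shift 2 1
  - (2 / private_rate) \*: (expR_shift residual_rate 1 - expR_shift 2 1).

Definition value (m0 m1 : bool) : R -> R :=
  match m0, m1 with true, true => cst 0 | false, false => W2 | _, _ => W1 end.

Definition arrival_gain (m0 m1 : bool) (i : 'I_3) (u : R) : R :=
  match m0, m1 with
  | true, true => 0
  | true, false => if i == i1 then W1 u else 1
  | false, true => if i == i2 then W1 u else 1
  | false, false => 1 + W1 u
  end.

Definition inflow (m0 m1 : bool) : R -> R :=
  match m0, m1 with
  | true, true => cst 0
  | false, false => cst 2 + 2 \*: W1
  | _, _ => cst residual_rate + private_rate \*: W1
  end.

Lemma sum_arrival_gain m0 m1 u :
  \sum_i rate i * arrival_gain m0 m1 i u = inflow m0 m1 u.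
Proof.
rewrite !big_ord_recr big_ord0 /= /rate /arrival_gain /inflow /=.
by case: m0; case: m1; rewrite /GRing.scale_fun /= ?fctE ?scale_realE
  /shared_rate /private_rate /residual_rate; ring.
Qed.

Lemma is_derive_value m0 m1 (x : R) :
  is_derive x 1 (value m0 m1) (2 * value m0 m1 x - inflow m0 m1 x).
Proof.
have c0 : private_rate != 0 by rewrite gt_eqF ?private_rate_gt0.
case: m0; case: m1; rewrite /value /inflow /W2 /W1; apply: is_derive_eq;
  rewrite /GRing.scale_fun !fctE /= ?scale_realE ?mulr0 ?subr0 //.
all: by move: c0; rewrite /residual_rate /private_rate => c0; field.
Qed.

Lemma continuous_inflow m0 m1 : continuous (inflow m0 m1 : R^o -> R^o).
Proof.
apply: continuous_derivable => x.
by case: m0; case: m1; rewrite /inflow /W1; exact: ex_derive.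
Qed.

Lemma value1 m0 m1 : value m0 m1 1 = 0.
Proof.
have e1 c : expR_shift c 1 1 = 1 by rewrite /expR_shift subrr mulr0 expR0.
by case: m0; case: m1;
  rewrite /value /W2 /W1 /GRing.scale_fun !fctE /= ?e1 ?scale_realE; ring.
Qed.

Lemma value_integral m0 m1 s : s < 1 ->
  (\int[mu]_(u in `[s, 1%R]) (expR_shift (- 2) s u * inflow m0 m1 u)%:E
    = (value m0 m1 s)%:E)%E.
Proof.
move=> s1; rewrite (discounted_integral_ode s1 (is_derive_value m0 m1)).
  by rewrite value1 mulr0 subr0.
exact: continuous_inflow.
Qed.

Lemma W1_ge0 u : u <= 1 -> 0 <= W1 u.
Proof.
move=> u1; rewrite /W1 !fctE /= subr_ge0 /expR_shift expR_le1 /residual_rate.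
by have := ln2_gt0; nra.
Qed.

Lemma W1_le1 u : W1 u <= 1.
Proof. by rewrite /W1 !fctE /= lerBlDr lerDl expR_ge0. Qed.

Lemma W2_le1DW1 u : u <= 1 -> W2 u <= 1 + W1 u.
Proof.
move=> u1; have l0 := ln2_gt0; have l1 := ln2_lt1.
rewrite /W2 /W1 /GRing.scale_fun !fctE /= !scale_realE.
set A := expR_shift residual_rate 1 u; set B := expR_shift 2 1 u.
have BA : B <= A by rewrite ler_expR /residual_rate; nra.
have A0 : 0 <= A by exact: expR_ge0.
have d2 : 2 <= 2 / private_rate.
  by rewrite ler_pdivlMr ?private_rate_gt0 // /private_rate; nra.
by set d := 2 / private_rate in d2 *; nra.
Qed.

Lemma inflow_ge0 m0 m1 u : u <= 1 -> 0 <= inflow m0 m1 u.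
Proof.
move=> u1; have := W1_ge0 u1; have := ln2_gt0; have := private_rate_gt0.
by case: m0; case: m1; rewrite /inflow /GRing.scale_fun !fctE /= ?scale_realE
  /residual_rate; nra.
Qed.

Lemma value_ge0 m0 m1 s : s <= 1 -> 0 <= value m0 m1 s.
Proof.
rewrite le_eqVlt => /predU1P[->|s1]; first by rewrite value1.
rewrite -lee_fin -(value_integral m0 m1 s1); apply: integral_ge0 => u.
rewrite /= in_itv /= => /andP[_ u1].
by rewrite lee_fin mulr_ge0 ?expR_ge0 ?inflow_ge0.
Qed.

Definition history_value (h : history R 'I_3 'I_2) : R -> R :=
  value (matched_in h j0) (matched_in h j1).

Lemma matched_in_rcons (h : history R 'I_3 'I_2) a j :
  matched_in (rcons h a) j = matched_in h j || (a.2 == Some j).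
Proof. by rewrite /matched_in has_rcons orbC. Qed.

Lemma policy_gain_le (p : policy R 'I_3 'I_2) h u i : valid_policy edges p ->
  u <= 1 ->
  \sum_(o : option 'I_2)
     p h u i o * ((o != None)%:R + history_value (rcons h (u, i, o)) u)
    <= arrival_gain (matched_in h j0) (matched_in h j1) i u.
Proof.
move=> vp u1; have [p0 [p1 pE]] := vp h u i.
rewrite -[leRHS]mul1r -[X in _ <= X * _]p1 big_distrl /=; apply: ler_sum => o _.
have [->|pn0] := eqVneq (p h u i o) 0; first by rewrite !mul0r.
have pp : 0 < p h u i o by rewrite lt_def pn0 p0.
apply: ler_wpM2l => //.
have := W1_le1 u; have := W2_le1DW1 u1.
rewrite /history_value !matched_in_rcons /=.
case: o pn0 pp => [j|] _ pp /=.
- have [] := pE j pp; rewrite inE /=.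
  by case: (ord2P j) => ->; case: (ord3P i) => -> //=;
    case: (matched_in h j0); case: (matched_in h j1) => //= _ _; lra.
- rewrite !orbF add0r /value /arrival_gain.
  by case: (matched_in h j0); case: (matched_in h j1) => //=; case: ifP => _; lra.
Qed.

Section bellman.
Variables (p : policy R 'I_3 'I_2) (vp : valid_policy edges p).

Lemma exp_matches_ge0 k h s : (0 <= exp_matches_k rate p k h s)%E.
Proof.
elim: k h s => [|k IH] h s //=; apply: integral_ge0 => u _.
rewrite mule_ge0 ?lee_fin ?expR_ge0 //; apply: sume_ge0 => i _; apply: sume_ge0 => o _.
have [p0 _] := vp h u i.
by rewrite mule_ge0 ?adde_ge0 ?lee_fin ?mulr_ge0 ?ler0n ?p0 ?(ltW (rate_gt0 i)).
Qed.

Lemma arrival_integrand_le h u : u <= 1 ->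
  (\sum_(i : 'I_3) \sum_(o : option 'I_2) ((rate i * p h u i o)%:E *
     (((o != None)%:R : R)%:E + (history_value (rcons h (u, i, o)) u)%:E))
   <= (inflow (matched_in h j0) (matched_in h j1) u)%:E)%E.
Proof.
move=> u1; rewrite -sum_arrival_gain -sumEFin; apply: lee_sum => i _.
under eq_bigr do rewrite -EFinD -EFinM -mulrA.
rewrite sumEFin lee_fin -big_distrr /=.
by apply: ler_wpM2l; [exact: ltW (rate_gt0 i) | exact: policy_gain_le].
Qed.

Lemma exp_matches_le_value k h s : s <= 1 ->
  (exp_matches_k rate p k h s <= (history_value h s)%:E)%E.
Proof.
elim: k h s => [|k IH] h s s1 /=; first by rewrite lee_fin value_ge0.
move: s1; rewrite le_eqVlt => /predU1P[->|s1].
  by rewrite set_itv1 integral_set1 lee_fin value_ge0.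
rewrite /history_value -value_integral // total_rate_edges.
apply: ge0_le_integral_nonmeasurable => u; rewrite /= in_itv /= => /andP[_ u1].
  rewrite mule_ge0 ?lee_fin ?expR_ge0 //; apply: sume_ge0 => i _; apply: sume_ge0 => o _.
  have [p0 _] := vp h u i.
  by rewrite mule_ge0 ?adde_ge0 ?exp_matches_ge0 ?lee_fin ?mulr_ge0 ?ler0n ?p0
    ?(ltW (rate_gt0 i)).
rewrite EFinM lee_wpmul2l ?lee_fin ?expR_ge0 //.
apply: le_trans (arrival_integrand_le h u1).
apply: lee_sum => i _; apply: lee_sum => o _; have [p0 _] := vp h u i.
rewrite lee_wpmul2l ?lee_fin ?mulr_ge0 ?p0 ?(ltW (rate_gt0 i)) //.
by apply: leeD2l; exact: IH.
Qed.

Lemma ALG_le_W2 : (ALG rate p <= (W2 0)%:E)%E.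
Proof.
apply: ge_ereal_sup => _ [k _ <-].
exact: (exp_matches_le_value k [::] ler01).
Qed.

End bellman.

Lemma W2_0 : W2 0 / 2 = jl_bound R.
Proof.
have e2 : expR_shift 2 1 0 = (expR 1 ^+ 2)^-1 :> R.
  by rewrite /expR_shift sub0r mulrN1 -expRM_natl -expRN mulr1.
have eL : expR_shift residual_rate 1 0 = (2 * expR 1)^-1 :> R.
  rewrite /expR_shift sub0r mulrN1 /residual_rate opprD expRD !expRN lnK ?posrE //.
  by rewrite invfM mulrC.
have c0 : 1 - ln 2 != 0 :> R by rewrite gt_eqF ?private_rate_gt0.
have e0 : expR 1 != 0 :> R by rewrite gt_eqF ?expR_gt0.
rewrite /W2 /GRing.scale_fun !fctE /= !scale_realE e2 eL /jl_bound /private_rate.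
by field; rewrite c0 e0.
Qed.

End hard_instance.

Theorem mainTheorem18 (R : realType) :
  exists (nI nJ : nat) (E : {set 'I_nI * 'I_nJ}) (lam : 'I_nI -> R),
    (forall i, 0 < lam i) /\
    exists v : R,
      JL_value E lam v /\ 0 < v /\
      forall p : policy R 'I_nI 'I_nJ, valid_policy E p ->
        (ALG lam p * (v^-1)%:E <= (jl_bound R)%:E)%E.
Proof.
exists 3%N, 2%N, edges, (@rate R); split; first exact: rate_gt0.
exists 2; split; first exact: JL_value_edges.
split=> // p vp; rewrite -W2_0 EFinM.
by rewrite lee_wpmul2r ?lee_fin ?invr_ge0 ?ler0n // ALG_le_W2.
Qed.
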